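(* Let $h_2,h_4,h_5$ and $\psi_2,\psi_4,\psi_5$ be as in the context. Then: (i)(a) $h_2(x)\ge h_5(x)\ge h_4(x)$ for all $x\ge0$; (i)(b) $h_2^{-1}(y)\le h_5^{-1}(y)\le h_4^{-1}(y)$ for all $y\ge 0$. (ii)(a) $h_2(x)\ge (x/2)\log(1+x)\ge (x/2)\log(1+x/2)$ for all $x\ge0$; (ii)(b) $h_4(x)\ge (x/2)\log(1+x/2)$ for all $x\ge0$; (ii)(c) $h_5(x)\ge (x/2)\log(1+x/2)$ for all $x\ge 0$. (iii)(a) $h_2(x)\sim x^2/2$ as $x\searrow0$ and $h_2(x)\sim x\log x$ as $x\to\infty$; (iii)(b) $h_4(x)\sim x^2/4$ as $x\searrow0$ and $h_4(x)\sim \frac12 x\log x$ as $x\to\infty$; (iii)(c) $h_5(x)\sim x^2/4$ as $x\searrow 0$ and $h_5(x)\sim x\log x$ as $x\to\infty$; (iii)(d) $h_2(x)-h_4(x)\sim x^2/4$ as $x\searrow0$ and $h_2(x)-h_4(x)\sim\frac12x\log x$ as $x\to\infty$; (iii)(e) $h_2(x)-h_5(x)\sim x^2/4$ as $x\searrow 0$ and $h_2(x)-h_5(x)\sim\log x$ as $x\to\infty$. (iv)(a) For $x>0$, $\psi_2(x)\ge x^{-1}\log(1+x)$ and $\psi_2(x)\ge (1+x/3)^{-1}$. (iv)(b) For $x>0$, $\psi_4(x)\ge 2x^{-1}\log(1+x/2)$ and $\psi_4(x)\ge \frac{1/2}{1+x/2}$; moreover for every $\delta\in(0,1/2)$, $\psi_4(x)\ge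 \frac{1-\delta}{1+x/2}$ whenever $0<x\le 2\delta^{1/2}/(1/2-\delta)^{1/2}$. (iv)(c) For $x>0$, $\psi_5(x)\ge 2x^{-1}\log(1+x/2)$ and $\psi_5(x)\ge \frac{1}{1+x/2}$.
   Context: For $x\ge0$: $h_2(x)=(1+x)\log(1+x)-x$ (Bennett); $h_4(x)=(x/2)\,\mathrm{arcsinh}(x/2)=(x/2)\log\big(x/2+\sqrt{1+(x/2)^2}\big)$ (Prokhorov); $h_5(x)=x\,\mathrm{arcsinh}(x/2)-2\big(\cosh(\mathrm{arcsinh}(x/2))-1\big)$ (Kruglov). Each is an increasing bijection of $[0,\infty)$ onto itself, with inverses $h_2^{-1},h_4^{-1},h_5^{-1}$. For $x>0$ define $\psi_2,\psi_4,\psi_5$ by $h_2(x)=\frac{x^2}{2}\psi_2(x)$, $h_4(x)=\frac{x^2}{4}\psi_4(x)$, $h_5(x)=\frac{x^2}{4}\psi_5(x)$. Here $f\sim g$ means $f/g\to1$. *)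

From Stdlib Require Import Reals ClassicalEpsilon.
From Coquelicot Require Import Coquelicot.
Open Scope R_scope.

Definition arcsinh (t : R) : R := ln (t + sqrt (1 + t ^ 2)).

Definition h2 (x : R) : R := (1 + x) * ln (1 + x) - x.
Definition h4 (x : R) : R := (x / 2) * arcsinh (x / 2).
Definition h5 (x : R) : R := x * arcsinh (x / 2) - 2 * (cosh (arcsinh (x / 2)) - 1).

Definition hinv (h : R -> R) (y : R) : R :=
  epsilon (inhabits 0) (fun x => 0 <= x /\ h x = y).

Definition psi2 (x : R) : R := h2 x / (x ^ 2 / 2).
Definition psi4 (x : R) : R := h4 x / (x ^ 2 / 4).
Definition psi5 (x : R) : R := h5 x / (x ^ 2 / 4).

Definition equiv_at_0plus (f g : R -> R) : Prop :=
  filterlim (fun x => f x / g x) (at_right 0) (locally 1).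
Definition equiv_at_infty (f g : R -> R) : Prop :=
  filterlim (fun x => f x / g x) (Rbar_locally p_infty) (locally 1).

From Pilot Require Import Defs.
From Stdlib Require Import Reals Lra ClassicalEpsilon.
From Coquelicot Require Import Coquelicot.
Open Scope R_scope.

(* All three functions vanish at 0, with h2' x = ln (1 + x), h5' x = arcsinh (x/2) and
   h4' x = arcsinh (x/2) / 2 + x / (4 sqrt (1 + x^2/4)).  Every inequality between them
   is therefore a comparison of derivatives on (0, oo), which reduces to the elementary
   bounds  t / sqrt (1 + t^2) <= arcsinh t <= min (t, ln (1 + 2t))  and
   2u / (2 + u) <= ln (1 + u).  The inverses are ordered the other way because h4 <= h5 <= h2
   and h4, h5 are strictly increasing.  Each asymptotic equivalence follows from explicit
   error bounds: a relative error O(x) near 0, and an absolute error O(x) (resp. O(1) for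
   h2 - h5) at infinity, i.e. a relative error O(1 / ln x). *)

Lemma nondecreasing_of_derive_nonneg (f df : R -> R) (u v : R) :
  u <= v ->
  (forall c, u <= c <= v -> is_derive f c (df c)) ->
  (forall c, u < c < v -> 0 <= df c) ->
  f u <= f v.
Proof.
  intros Huv Hder Hpos.
  destruct (Req_dec u v) as [<- | Hne]; [lra |].
  destruct (MVT_cor2 f df u v) as (c & Hmvt & Hc); [lra | |].
  - intros c Hc. apply is_derive_Reals, Hder, Hc.
  - specialize (Hpos c Hc). nra.
Qed.

Lemma increasing_of_derive_pos (f df : R -> R) (u v : R) :
  u < v ->
  (forall c, u <= c <= v -> is_derive f c (df c)) ->
  (forall c, u < c < v -> 0 < df c) ->
  f u < f v.
Proof.
  intros Huv Hder Hpos.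
  destruct (MVT_cor2 f df u v) as (c & Hmvt & Hc); [lra | |].
  - intros c Hc. apply is_derive_Reals, Hder, Hc.
  - specialize (Hpos c Hc). nra.
Qed.

Lemma le_of_derive_le (f g df dg : R -> R) (x : R) :
  0 <= x -> f 0 <= g 0 ->
  (forall c, 0 <= c -> is_derive f c (df c)) ->
  (forall c, 0 <= c -> is_derive g c (dg c)) ->
  (forall c, 0 < c -> df c <= dg c) ->
  f x <= g x.
Proof.
  intros Hx H0 Hf Hg Hle.
  enough (g 0 - f 0 <= g x - f x) by lra.
  apply (nondecreasing_of_derive_nonneg (fun t => g t - f t) (fun t => dg t - df t));
    [exact Hx | |].
  - intros c Hc. apply (is_derive_minus g f); [apply Hg | apply Hf]; lra.
  - intros c Hc. specialize (Hle c ltac:(lra)). lra.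
Qed.

Lemma Rdiv_le_div_cross (a b c d : R) :
  0 < b -> 0 < d -> a * d <= c * b -> a / b <= c / d.
Proof.
  intros Hb Hd Hcross.
  replace (a / b) with (a * d / (b * d)) by (field; lra).
  replace (c / d) with (c * b / (b * d)) by (field; lra).
  apply Rmult_le_compat_r; [apply Rlt_le, Rinv_0_lt_compat; nra | exact Hcross].
Qed.

Lemma ln_le_sub_1 (x : R) : 0 < x -> ln x <= x - 1.
Proof.
  intros Hx. pose proof (exp_ineq1_le (ln x)) as Hexp.
  rewrite exp_ln in Hexp; lra.
Qed.

Lemma ln_1_plus_ge_pade (u : R) : 0 <= u -> 2 * u / (2 + u) <= ln (1 + u).
Proof.
  intros Hu.
  apply (le_of_derive_le (fun u => 2 * u / (2 + u)) (fun u => ln (1 + u))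
           (fun u => 4 / (2 + u) ^ 2) (fun u => 1 / (1 + u))); [exact Hu | | | |].
  - rewrite !Rplus_0_r, ln_1. lra.
  - intros c Hc. auto_derive; [lra | field; lra].
  - intros c Hc. auto_derive; [lra | field; lra].
  - intros c Hc. apply Rdiv_le_div_cross; nra.
Qed.

Lemma ln_1_plus_ge_div (u : R) : 0 <= u -> u / (1 + u) <= ln (1 + u).
Proof.
  intros Hu. apply Rle_trans with (2 * u / (2 + u)); [| now apply ln_1_plus_ge_pade].
  apply Rdiv_le_div_cross; nra.
Qed.

Lemma ln_1_plus_sub_ln_le (x : R) : 0 < x -> ln (1 + x) - ln x <= / x.
Proof.
  intros Hx. rewrite <- ln_div by lra.
  pose proof (ln_le_sub_1 ((1 + x) / x) ltac:(apply Rdiv_lt_0_compat; lra)) as Hle.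
  replace ((1 + x) / x - 1) with (/ x) in Hle by (field; lra). exact Hle.
Qed.

Lemma sqrt_sq_1_pos (t : R) : 0 < sqrt (t ^ 2 + 1).
Proof. apply sqrt_lt_R0. nra. Qed.

Lemma sqrt_sq_1_sqr (t : R) : sqrt (t ^ 2 + 1) ^ 2 = t ^ 2 + 1.
Proof. apply pow2_sqrt. nra. Qed.

Lemma sqrt_sq_1_bounds (t : R) :
  0 <= t -> 1 <= sqrt (t ^ 2 + 1) /\ t < sqrt (t ^ 2 + 1) <= 1 + t.
Proof.
  intros Ht. pose proof (sqrt_sq_1_pos t). pose proof (sqrt_sq_1_sqr t).
  repeat split; nra.
Qed.

Lemma cosh_eq_sqrt_sinh (u : R) : cosh u = sqrt (sinh u ^ 2 + 1).
Proof.
  assert (Hpos : 0 <= cosh u).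
  { unfold cosh. pose proof (exp_pos u). pose proof (exp_pos (- u)). lra. }
  rewrite <- (sqrt_pow2 (cosh u) Hpos). f_equal.
  unfold cosh, sinh. rewrite exp_Ropp. field. apply Rgt_not_eq, exp_pos.
Qed.

Lemma cosh_arcsinh (t : R) : cosh (arcsinh t) = sqrt (t ^ 2 + 1).
Proof. now rewrite cosh_eq_sqrt_sinh, sinh_arcsinh. Qed.

Lemma is_derive_arcsinh (t : R) : is_derive arcsinh t (/ sqrt (t ^ 2 + 1)).
Proof. apply is_derive_Reals, derivable_pt_lim_arcsinh. Qed.

Lemma arcsinh_pos (t : R) : 0 < t -> 0 < arcsinh t.
Proof. intros Ht. rewrite <- arcsinh_0. now apply arcsinh_lt. Qed.

Lemma arcsinh_le_id (t : R) : 0 <= t -> arcsinh t <= t.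
Proof.
  intros Ht.
  apply (le_of_derive_le arcsinh (fun t => t) (fun t => / sqrt (t ^ 2 + 1)) (fun _ => 1));
    [exact Ht | rewrite arcsinh_0; lra | intros c _; apply is_derive_arcsinh | |].
  - intros c _. auto_derive; auto.
  - intros c Hc. destruct (sqrt_sq_1_bounds c) as [Hge1 _]; [lra |].
    apply Rinv_le_contravar in Hge1; [rewrite Rinv_1 in Hge1; exact Hge1 | lra].
Qed.

Lemma div_sqrt_sq_1_le_arcsinh (t : R) : 0 <= t -> t / sqrt (t ^ 2 + 1) <= arcsinh t.
Proof.
  intros Ht.
  apply (le_of_derive_le (fun t => t / sqrt (t ^ 2 + 1)) arcsinh
           (fun t => / sqrt (t ^ 2 + 1) ^ 3) (fun t => / sqrt (t ^ 2 + 1)));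
    [exact Ht | | | intros c _; apply is_derive_arcsinh |].
  - rewrite arcsinh_0. unfold Rdiv. lra.
  - intros c _. pose proof (sqrt_sq_1_pos c). pose proof (sqrt_sq_1_sqr c) as Hsqr.
    auto_derive; replace (c * (c * 1) + 1) with (c ^ 2 + 1) by ring; [repeat split; nra |].
    set (s := sqrt (c ^ 2 + 1)) in *.
    transitivity ((s ^ 2 - c ^ 2) / s ^ 3); [field; lra | rewrite Hsqr; field; lra].
  - intros c Hc. destruct (sqrt_sq_1_bounds c) as [Hge1 _]; [lra |].
    apply Rinv_le_contravar; [lra | nra].
Qed.

Lemma ln_1_plus_le_arcsinh (t : R) : 0 <= t -> ln (1 + t) <= arcsinh t.
Proof.
  intros Ht. destruct (sqrt_sq_1_bounds t Ht) as [Hge1 _].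
  apply ln_le; lra.
Qed.

Lemma arcsinh_le_ln_1_plus_double (t : R) : 0 <= t -> arcsinh t <= ln (1 + 2 * t).
Proof.
  intros Ht. destruct (sqrt_sq_1_bounds t Ht) as [_ [Hgt Hle]].
  apply ln_le; lra.
Qed.

Lemma ln_double_le_arcsinh (t : R) : 0 < t -> ln (2 * t) <= arcsinh t.
Proof.
  intros Ht. destruct (sqrt_sq_1_bounds t) as [_ [Hgt _]]; [lra |].
  apply ln_le; lra.
Qed.

(* Below, [arcsinh] is the standard library's [ln (t + sqrt (t ^ 2 + 1))]; it agrees with
   [Defs.arcsinh] and comes with its derivative and [sinh_arcsinh]. *)
Lemma Defs_arcsinh (t : R) : Defs.arcsinh t = arcsinh t.
Proof. unfold Defs.arcsinh, arcsinh. now rewrite (Rplus_comm 1). Qed.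

Lemma h4_arcsinh (x : R) : h4 x = x / 2 * arcsinh (x / 2).
Proof. unfold h4. now rewrite Defs_arcsinh. Qed.

Lemma h5_cosh (x : R) : h5 x = x * arcsinh (x / 2) - 2 * (cosh (arcsinh (x / 2)) - 1).
Proof. unfold h5. now rewrite Defs_arcsinh. Qed.

Lemma h5_sqrt (x : R) : h5 x = x * arcsinh (x / 2) - 2 * (sqrt ((x / 2) ^ 2 + 1) - 1).
Proof. now rewrite h5_cosh, cosh_arcsinh. Qed.

Lemma h2_0 : h2 0 = 0.
Proof. unfold h2. rewrite Rplus_0_r, ln_1. ring. Qed.

Lemma h4_0 : h4 0 = 0.
Proof. rewrite h4_arcsinh. replace (0 / 2) with 0 by field. rewrite arcsinh_0. ring. Qed.

Lemma h5_0 : h5 0 = 0.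
Proof. rewrite h5_cosh. replace (0 / 2) with 0 by field. rewrite arcsinh_0, cosh_0. ring. Qed.

Lemma is_derive_h2 (x : R) : -1 < x -> is_derive h2 x (ln (1 + x)).
Proof. intros Hx. unfold h2. auto_derive; [lra | field; lra]. Qed.

Lemma Derive_arcsinh (t : R) : Derive arcsinh t = / sqrt (t ^ 2 + 1).
Proof. apply is_derive_unique, is_derive_arcsinh. Qed.

Lemma ex_derive_arcsinh (t : R) : ex_derive arcsinh t.
Proof. eexists. apply is_derive_arcsinh. Qed.

Lemma is_derive_h4 (x : R) :
  is_derive h4 x (arcsinh (x / 2) / 2 + x / (4 * sqrt ((x / 2) ^ 2 + 1))).
Proof.
  apply (is_derive_ext (fun x => x / 2 * arcsinh (x / 2))); [intros; now rewrite h4_arcsinh |].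
  pose proof (sqrt_sq_1_pos (x / 2)).
  auto_derive; [apply ex_derive_arcsinh |].
  rewrite Derive_arcsinh. unfold Rdiv in *. field. lra.
Qed.

Lemma is_derive_h5 (x : R) : is_derive h5 x (arcsinh (x / 2)).
Proof.
  apply (is_derive_ext (fun x => x * arcsinh (x / 2) - 2 * (cosh (arcsinh (x / 2)) - 1)));
    [intros; now rewrite h5_cosh |].
  auto_derive; [repeat split; apply ex_derive_arcsinh |].
  rewrite sinh_arcsinh. unfold Rdiv. field.
Qed.

Lemma h4_le_h5 (x : R) : 0 <= x -> h4 x <= h5 x.
Proof.
  intros Hx.
  apply (le_of_derive_le h4 h5
           (fun c => arcsinh (c / 2) / 2 + c / (4 * sqrt ((c / 2) ^ 2 + 1)))
           (fun c => arcsinh (c / 2)));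
    [exact Hx | rewrite h4_0, h5_0; lra | intros c _; apply is_derive_h4
    | intros c _; apply is_derive_h5 |].
  intros c Hc.
  pose proof (div_sqrt_sq_1_le_arcsinh (c / 2) ltac:(lra)).
  pose proof (sqrt_sq_1_pos (c / 2)).
  replace (c / (4 * sqrt ((c / 2) ^ 2 + 1))) with (c / 2 / sqrt ((c / 2) ^ 2 + 1) / 2)
    by (field; lra).
  lra.
Qed.

Lemma h5_le_h2 (x : R) : 0 <= x -> h5 x <= h2 x.
Proof.
  intros Hx.
  apply (le_of_derive_le h5 h2 (fun c => arcsinh (c / 2)) (fun c => ln (1 + c)));
    [exact Hx | rewrite h5_0, h2_0; lra | intros c _; apply is_derive_h5
    | intros c Hc; apply is_derive_h2; lra |].
  intros c Hc.
  replace c with (2 * (c / 2)) at 2 by field.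
  apply arcsinh_le_ln_1_plus_double. lra.
Qed.

Lemma h2_le_half_sq (x : R) : 0 <= x -> h2 x <= x ^ 2 / 2.
Proof.
  intros Hx.
  apply (le_of_derive_le h2 (fun x => x ^ 2 / 2) (fun c => ln (1 + c)) (fun c => c));
    [exact Hx | rewrite h2_0; lra | intros c Hc; apply is_derive_h2; lra
    | intros c _; auto_derive; [easy | field] |].
  intros c Hc. pose proof (ln_le_sub_1 (1 + c)). lra.
Qed.

Lemma h2_ge_rational (x : R) : 0 <= x -> x ^ 2 / 2 / (1 + x / 3) <= h2 x.
Proof.
  intros Hx.
  apply (le_of_derive_le (fun x => x ^ 2 / 2 / (1 + x / 3)) h2
           (fun c => 3 * c * (c + 6) / (2 * (c + 3) ^ 2)) (fun c => ln (1 + c)));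
    [exact Hx | rewrite h2_0; lra | intros c Hc; auto_derive; [lra | field; lra]
    | intros c Hc; apply is_derive_h2; lra |].
  intros c Hc.
  apply Rle_trans with (2 * c / (2 + c)); [| apply ln_1_plus_ge_pade; lra].
  apply Rdiv_le_div_cross; nra.
Qed.

Lemma h5_le_quarter_sq (x : R) : 0 <= x -> h5 x <= x ^ 2 / 4.
Proof.
  intros Hx.
  apply (le_of_derive_le h5 (fun x => x ^ 2 / 4) (fun c => arcsinh (c / 2)) (fun c => c / 2));
    [exact Hx | rewrite h5_0; lra | intros c _; apply is_derive_h5
    | intros c _; auto_derive; [easy | field] |].
  intros c Hc. apply arcsinh_le_id. lra.
Qed.

Lemma h4_le_quarter_sq (x : R) : 0 <= x -> h4 x <= x ^ 2 / 4.
Proof.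
  intros Hx. rewrite h4_arcsinh.
  replace (x ^ 2 / 4) with (x / 2 * (x / 2)) by field.
  apply Rmult_le_compat_l; [lra | apply arcsinh_le_id; lra].
Qed.

Lemma h4_ge_half_mul_ln (x : R) : 0 <= x -> x / 2 * ln (1 + x / 2) <= h4 x.
Proof.
  intros Hx. rewrite h4_arcsinh.
  apply Rmult_le_compat_l; [lra | apply ln_1_plus_le_arcsinh; lra].
Qed.

Lemma h4_ge_rational (x : R) : 0 <= x -> x ^ 2 / 4 / (1 + x / 2) <= h4 x.
Proof.
  intros Hx. eapply Rle_trans; [| now apply h4_ge_half_mul_ln].
  replace (x ^ 2 / 4 / (1 + x / 2)) with (x / 2 * (x / 2 / (1 + x / 2))) by (field; lra).
  apply Rmult_le_compat_l; [lra | apply ln_1_plus_ge_div; lra].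
Qed.

Lemma h2_ge_half_mul_ln (x : R) : 0 <= x -> x / 2 * ln (1 + x) <= h2 x.
Proof.
  intros Hx. unfold h2.
  pose proof (ln_1_plus_ge_pade x Hx) as Hpade.
  apply Rmult_le_compat_l with (r := 1 + x / 2) in Hpade; [| lra].
  replace ((1 + x / 2) * (2 * x / (2 + x))) with x in Hpade by (field; lra).
  lra.
Qed.

Lemma h4_increasing (u v : R) : 0 <= u < v -> h4 u < h4 v.
Proof.
  intros Huv.
  apply (increasing_of_derive_pos h4
           (fun c => arcsinh (c / 2) / 2 + c / (4 * sqrt ((c / 2) ^ 2 + 1))));
    [lra | intros c _; apply is_derive_h4 |].
  intros c Hc.
  pose proof (arcsinh_pos (c / 2) ltac:(lra)).
  pose proof (sqrt_sq_1_pos (c / 2)).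
  assert (0 < c / (4 * sqrt ((c / 2) ^ 2 + 1))) by (apply Rdiv_lt_0_compat; lra).
  lra.
Qed.

Lemma h5_increasing (u v : R) : 0 <= u < v -> h5 u < h5 v.
Proof.
  intros Huv.
  apply (increasing_of_derive_pos h5 (fun c => arcsinh (c / 2)));
    [lra | intros c _; apply is_derive_h5 |].
  intros c Hc. apply arcsinh_pos. lra.
Qed.

Lemma hinv_spec (h : R -> R) (y : R) :
  0 <= y -> h 0 = 0 ->
  (forall x, 0 <= x -> continuity_pt h x) ->
  (exists X, 0 <= X /\ y < h X) ->
  0 <= hinv h y /\ h (hinv h y) = y.
Proof.
  intros Hy H0 Hcont (X & HX & HyX). unfold hinv. apply epsilon_spec.
  destruct (Req_dec y 0) as [-> | Hy0]; [exists 0; split; [lra | exact H0] |].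
  destruct (Ranalysis5.IVT_interv (fun x => h x - y) 0 X) as (z & Hz & Hhz).
  - intros a Ha. apply continuity_pt_minus; [apply Hcont; lra | apply continuity_pt_const].
    now intros u v.
  - destruct (Req_dec X 0) as [-> | HX0]; lra.
  - lra.
  - lra.
  - exists z. split; lra.
Qed.

Lemma hinv_le_hinv (h k : R -> R) (y : R) :
  0 <= hinv h y -> h (hinv h y) = y ->
  0 <= hinv k y -> k (hinv k y) = y ->
  (forall u v, 0 <= u < v -> k u < k v) ->
  (forall x, 0 <= x -> k x <= h x) ->
  hinv h y <= hinv k y.
Proof.
  intros Hh Hhy Hk Hky Hincr Hle.
  apply Rnot_lt_le. intros Hlt.
  pose proof (Hincr _ _ (conj Hk Hlt)). pose proof (Hle _ Hh). lra.
Qed.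

Lemma h4_unbounded (y : R) : 0 <= y -> exists X, 0 <= X /\ y < h4 X.
Proof.
  intros Hy. exists (2 * y + 4). split; [lra |].
  eapply Rlt_le_trans; [| apply h4_ge_rational; lra].
  apply Rlt_div_r; [lra |]. nra.
Qed.

Lemma continuity_pt_of_is_derive (f : R -> R) (x l : R) :
  is_derive f x l -> continuity_pt f x.
Proof. intros Hd. apply continuity_pt_filterlim, (ex_derive_continuous f). now exists l. Qed.

Lemma hinv_h4_spec (y : R) : 0 <= y -> 0 <= hinv h4 y /\ h4 (hinv h4 y) = y.
Proof.
  intros Hy. apply hinv_spec; [exact Hy | exact h4_0 | | now apply h4_unbounded].
  intros x _. eapply continuity_pt_of_is_derive, is_derive_h4.
Qed.

Lemma hinv_h5_spec (y : R) : 0 <= y -> 0 <= hinv h5 y /\ h5 (hinv h5 y) = y.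
Proof.
  intros Hy. apply hinv_spec; [exact Hy | exact h5_0 | |].
  - intros x _. eapply continuity_pt_of_is_derive, is_derive_h5.
  - destruct (h4_unbounded y Hy) as (X & HX & HyX).
    exists X. split; [exact HX |]. eapply Rlt_le_trans; [exact HyX | now apply h4_le_h5].
Qed.

Lemma hinv_h2_spec (y : R) : 0 <= y -> 0 <= hinv h2 y /\ h2 (hinv h2 y) = y.
Proof.
  intros Hy. apply hinv_spec; [exact Hy | exact h2_0 | |].
  - intros x Hx. eapply continuity_pt_of_is_derive, is_derive_h2. lra.
  - destruct (h4_unbounded y Hy) as (X & HX & HyX).
    exists X. split; [exact HX |]. pose proof (h4_le_h5 X HX). pose proof (h5_le_h2 X HX). lra.
Qed.

Lemma equiv_at_0plus_of_rel_error (f g : R -> R) :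
  (forall x, 0 < x -> 0 < g x /\ Rabs (f x - g x) <= x * g x) ->
  equiv_at_0plus f g.
Proof.
  intros Hbound. apply filterlim_locally. intros eps.
  exists eps. intros x Hx Hpos. destruct (Hbound x Hpos) as [Hg Hfg].
  change (Rabs (x - 0) < eps) in Hx. rewrite Rminus_0_r, Rabs_pos_eq in Hx by lra.
  change (Rabs (f x / g x - 1) < eps).
  replace (f x / g x - 1) with ((f x - g x) / g x) by (field; lra).
  rewrite Rabs_div, (Rabs_pos_eq (g x)) by lra.
  apply Rlt_div_l; [exact Hg | nra].
Qed.

Lemma equiv_at_infty_of_log_error (f g : R -> R) (M C : R) :
  (forall x, M <= x -> 0 < g x /\ Rabs (f x - g x) * ln x <= C * g x) ->
  equiv_at_infty f g.
Proof.
  intros Hbound. apply filterlim_locally. intros eps.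
  pose proof (cond_pos eps) as Heps.
  exists (Rmax M (exp (Rabs C / eps))). intros x Hx.
  pose proof (Rmax_l M (exp (Rabs C / eps))) as HM.
  pose proof (Rmax_r M (exp (Rabs C / eps))) as Hexp.
  assert (HlnC : Rabs C / eps < ln x).
  { rewrite <- (ln_exp (Rabs C / eps)). apply ln_increasing; [apply exp_pos | lra]. }
  apply Rlt_div_l in HlnC; [| exact Heps].
  pose proof (Rabs_pos C). pose proof (Rle_abs C).
  destruct (Hbound x ltac:(lra)) as [Hg Hfg].
  change (Rabs (f x / g x - 1) < eps).
  replace (f x / g x - 1) with ((f x - g x) / g x) by (field; lra).
  rewrite Rabs_div, (Rabs_pos_eq (g x)) by lra.
  apply Rlt_div_l; [exact Hg |].
  assert (Hln : 0 < ln x) by nra.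
  apply Rmult_lt_reg_r with (ln x); [exact Hln | nra].
Qed.

Lemma div_1_plus_ge (a u : R) : 0 <= a -> 0 <= u -> a - a * u <= a / (1 + u).
Proof.
  intros Ha Hu. rewrite <- Rle_div_r by lra. nra.
Qed.

Lemma h2_equiv_0 : equiv_at_0plus h2 (fun x => x ^ 2 / 2).
Proof.
  apply equiv_at_0plus_of_rel_error. intros x Hx.
  pose proof (h2_le_half_sq x ltac:(lra)). pose proof (h2_ge_rational x ltac:(lra)).
  pose proof (div_1_plus_ge (x ^ 2 / 2) (x / 3) ltac:(nra) ltac:(lra)).
  split; [nra | apply Rabs_le; split; nra].
Qed.

Lemma h4_equiv_0 : equiv_at_0plus h4 (fun x => x ^ 2 / 4).
Proof.
  apply equiv_at_0plus_of_rel_error. intros x Hx.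
  pose proof (h4_le_quarter_sq x ltac:(lra)). pose proof (h4_ge_rational x ltac:(lra)).
  pose proof (div_1_plus_ge (x ^ 2 / 4) (x / 2) ltac:(nra) ltac:(lra)).
  split; [nra | apply Rabs_le; split; nra].
Qed.

Lemma h5_equiv_0 : equiv_at_0plus h5 (fun x => x ^ 2 / 4).
Proof.
  apply equiv_at_0plus_of_rel_error. intros x Hx.
  pose proof (h5_le_quarter_sq x ltac:(lra)). pose proof (h4_le_h5 x ltac:(lra)).
  pose proof (h4_ge_rational x ltac:(lra)).
  pose proof (div_1_plus_ge (x ^ 2 / 4) (x / 2) ltac:(nra) ltac:(lra)).
  split; [nra | apply Rabs_le; split; nra].
Qed.

Lemma h2_sub_h4_equiv_0 : equiv_at_0plus (fun x => h2 x - h4 x) (fun x => x ^ 2 / 4).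
Proof.
  apply equiv_at_0plus_of_rel_error. intros x Hx.
  pose proof (h2_le_half_sq x ltac:(lra)). pose proof (h2_ge_rational x ltac:(lra)).
  pose proof (h4_le_quarter_sq x ltac:(lra)). pose proof (h4_ge_rational x ltac:(lra)).
  pose proof (div_1_plus_ge (x ^ 2 / 2) (x / 3) ltac:(nra) ltac:(lra)).
  pose proof (div_1_plus_ge (x ^ 2 / 4) (x / 2) ltac:(nra) ltac:(lra)).
  split; [nra | apply Rabs_le; split; nra].
Qed.

Lemma h2_sub_h5_equiv_0 : equiv_at_0plus (fun x => h2 x - h5 x) (fun x => x ^ 2 / 4).
Proof.
  apply equiv_at_0plus_of_rel_error. intros x Hx.
  pose proof (h2_le_half_sq x ltac:(lra)). pose proof (h2_ge_rational x ltac:(lra)).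
  pose proof (h5_le_quarter_sq x ltac:(lra)). pose proof (h4_le_h5 x ltac:(lra)).
  pose proof (h4_ge_rational x ltac:(lra)).
  pose proof (div_1_plus_ge (x ^ 2 / 2) (x / 3) ltac:(nra) ltac:(lra)).
  pose proof (div_1_plus_ge (x ^ 2 / 4) (x / 2) ltac:(nra) ltac:(lra)).
  split; [nra | apply Rabs_le; split; nra].
Qed.

Lemma h2_sub_bounds (x : R) : 1 <= x -> - x <= h2 x - (1 + x) * ln x <= 2 - x.
Proof.
  intros Hx. unfold h2.
  pose proof (ln_le x (1 + x) ltac:(lra) ltac:(lra)).
  pose proof (ln_1_plus_sub_ln_le x ltac:(lra)) as Hdiff.
  apply Rmult_le_compat_l with (r := x) in Hdiff; [| lra].
  rewrite Rinv_r in Hdiff by lra.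
  split; nra.
Qed.

Lemma arcsinh_half_sub_ln_bounds (x : R) : 0 < x -> 0 <= x * (arcsinh (x / 2) - ln x) <= 1.
Proof.
  intros Hx.
  pose proof (ln_double_le_arcsinh (x / 2) ltac:(lra)) as Hlo.
  pose proof (arcsinh_le_ln_1_plus_double (x / 2) ltac:(lra)) as Hup.
  replace (2 * (x / 2)) with x in Hlo, Hup by field.
  pose proof (ln_1_plus_sub_ln_le x Hx) as Hdiff.
  apply Rmult_le_compat_l with (r := x) in Hdiff; [| lra].
  rewrite Rinv_r in Hdiff by lra.
  split; nra.
Qed.

Lemma h4_sub_bounds (x : R) : 0 < x -> 0 <= h4 x - x * ln x / 2 <= 1 / 2.
Proof.
  intros Hx. rewrite h4_arcsinh. pose proof (arcsinh_half_sub_ln_bounds x Hx). lra.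
Qed.

Lemma h5_sub_bounds (x : R) : 0 < x -> - x <= h5 x - x * ln x <= 3 - x.
Proof.
  intros Hx. rewrite h5_sqrt.
  pose proof (arcsinh_half_sub_ln_bounds x Hx).
  destruct (sqrt_sq_1_bounds (x / 2)) as [_ [Hlo Hup]]; [lra |].
  lra.
Qed.

Lemma ln_bounds_ge_3 (x : R) : 3 <= x -> 1 <= ln x <= x.
Proof.
  intros Hx. split; [| pose proof (ln_le_sub_1 x); lra].
  rewrite <- (ln_exp 1) at 1.
  apply ln_le; [apply exp_pos |]. pose proof exp_le_3. lra.
Qed.

Lemma h2_equiv_infty : equiv_at_infty h2 (fun x => x * ln x).
Proof.
  apply (equiv_at_infty_of_log_error _ _ 3 1). intros x Hx.
  pose proof (ln_bounds_ge_3 x Hx). pose proof (h2_sub_bounds x ltac:(lra)).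
  split; [nra |].
  apply Rle_trans with (x * ln x); [| lra].
  apply Rmult_le_compat_r; [lra | apply Rabs_le; split; nra].
Qed.

Lemma h4_equiv_infty : equiv_at_infty h4 (fun x => / 2 * x * ln x).
Proof.
  apply (equiv_at_infty_of_log_error _ _ 3 1). intros x Hx.
  pose proof (ln_bounds_ge_3 x Hx). pose proof (h4_sub_bounds x ltac:(lra)).
  split; [nra |].
  apply Rle_trans with (/ 2 * ln x); [| nra].
  apply Rmult_le_compat_r; [lra | apply Rabs_le; split; lra].
Qed.

Lemma h5_equiv_infty : equiv_at_infty h5 (fun x => x * ln x).
Proof.
  apply (equiv_at_infty_of_log_error _ _ 3 1). intros x Hx.
  pose proof (ln_bounds_ge_3 x Hx). pose proof (h5_sub_bounds x ltac:(lra)).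
  split; [nra |].
  apply Rle_trans with (x * ln x); [| lra].
  apply Rmult_le_compat_r; [lra | apply Rabs_le; split; lra].
Qed.

Lemma h2_sub_h4_equiv_infty :
  equiv_at_infty (fun x => h2 x - h4 x) (fun x => / 2 * x * ln x).
Proof.
  apply (equiv_at_infty_of_log_error _ _ 3 3). intros x Hx.
  pose proof (ln_bounds_ge_3 x Hx).
  pose proof (h2_sub_bounds x ltac:(lra)). pose proof (h4_sub_bounds x ltac:(lra)).
  split; [nra |].
  apply Rle_trans with ((x + 1 / 2) * ln x); [| nra].
  apply Rmult_le_compat_r; [lra | apply Rabs_le; split; nra].
Qed.

Lemma h2_sub_h5_equiv_infty : equiv_at_infty (fun x => h2 x - h5 x) (fun x => ln x).
Proof.
  apply (equiv_at_infty_of_log_error _ _ 3 3). intros x Hx.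
  pose proof (ln_bounds_ge_3 x Hx).
  pose proof (h2_sub_bounds x ltac:(lra)). pose proof (h5_sub_bounds x ltac:(lra)).
  split; [lra |].
  apply Rmult_le_compat_r; [lra | apply Rabs_le; split; nra].
Qed.

Lemma psi2_ge_ln (x : R) : 0 < x -> / x * ln (1 + x) <= psi2 x.
Proof.
  intros Hx. unfold psi2. rewrite <- Rle_div_r by nra.
  replace (/ x * ln (1 + x) * (x ^ 2 / 2)) with (x / 2 * ln (1 + x)) by (field; lra).
  apply h2_ge_half_mul_ln. lra.
Qed.

Lemma psi2_ge_rational (x : R) : 0 < x -> / (1 + x / 3) <= psi2 x.
Proof.
  intros Hx. unfold psi2. rewrite <- Rle_div_r by nra.
  replace (/ (1 + x / 3) * (x ^ 2 / 2)) with (x ^ 2 / 2 / (1 + x / 3)) by (field; lra).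
  apply h2_ge_rational. lra.
Qed.

Lemma psi4_ge_ln (x : R) : 0 < x -> 2 * / x * ln (1 + x / 2) <= psi4 x.
Proof.
  intros Hx. unfold psi4. rewrite <- Rle_div_r by nra.
  replace (2 * / x * ln (1 + x / 2) * (x ^ 2 / 4)) with (x / 2 * ln (1 + x / 2))
    by (field; lra).
  apply h4_ge_half_mul_ln. lra.
Qed.

Lemma psi4_ge_rational (x : R) : 0 < x -> 1 / (1 + x / 2) <= psi4 x.
Proof.
  intros Hx. unfold psi4. rewrite <- Rle_div_r by nra.
  replace (1 / (1 + x / 2) * (x ^ 2 / 4)) with (x ^ 2 / 4 / (1 + x / 2)) by (field; lra).
  apply h4_ge_rational. lra.
Qed.

Lemma psi4_le_psi5 (x : R) : 0 < x -> psi4 x <= psi5 x.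
Proof.
  intros Hx. unfold psi4, psi5.
  apply Rmult_le_compat_r; [apply Rlt_le, Rinv_0_lt_compat; nra | apply h4_le_h5; lra].
Qed.

Theorem lemma11 :
  (* (i)(a) *)
  (forall x : R, 0 <= x -> h2 x >= h5 x /\ h5 x >= h4 x) /\
  (* (i)(b) *)
  (forall y : R, 0 <= y -> hinv h2 y <= hinv h5 y /\ hinv h5 y <= hinv h4 y) /\
  (* (ii)(a) *)
  (forall x : R, 0 <= x ->
     h2 x >= (x / 2) * ln (1 + x) /\ (x / 2) * ln (1 + x) >= (x / 2) * ln (1 + x / 2)) /\
  (* (ii)(b) *)
  (forall x : R, 0 <= x -> h4 x >= (x / 2) * ln (1 + x / 2)) /\
  (* (ii)(c) *)
  (forall x : R, 0 <= x -> h5 x >= (x / 2) * ln (1 + x / 2)) /\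
  (* (iii)(a) *)
  (equiv_at_0plus h2 (fun x => x ^ 2 / 2) /\
   equiv_at_infty h2 (fun x => x * ln x)) /\
  (* (iii)(b) *)
  (equiv_at_0plus h4 (fun x => x ^ 2 / 4) /\
   equiv_at_infty h4 (fun x => / 2 * x * ln x)) /\
  (* (iii)(c) *)
  (equiv_at_0plus h5 (fun x => x ^ 2 / 4) /\
   equiv_at_infty h5 (fun x => x * ln x)) /\
  (* (iii)(d) *)
  (equiv_at_0plus (fun x => h2 x - h4 x) (fun x => x ^ 2 / 4) /\
   equiv_at_infty (fun x => h2 x - h4 x) (fun x => / 2 * x * ln x)) /\
  (* (iii)(e) *)
  (equiv_at_0plus (fun x => h2 x - h5 x) (fun x => x ^ 2 / 4) /\
   equiv_at_infty (fun x => h2 x - h5 x) (fun x => ln x)) /\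
  (* (iv)(a) *)
  (forall x : R, 0 < x ->
     psi2 x >= / x * ln (1 + x) /\ psi2 x >= / (1 + x / 3)) /\
  (* (iv)(b) *)
  (forall x : R, 0 < x ->
     psi4 x >= 2 * / x * ln (1 + x / 2) /\ psi4 x >= (1 / 2) / (1 + x / 2)) /\
  (forall delta x : R, 0 < delta < 1 / 2 ->
     0 < x <= 2 * sqrt delta / sqrt (1 / 2 - delta) ->
     psi4 x >= (1 - delta) / (1 + x / 2)) /\
  (* (iv)(c) *)
  (forall x : R, 0 < x ->
     psi5 x >= 2 * / x * ln (1 + x / 2) /\ psi5 x >= 1 / (1 + x / 2)).
Proof.
  assert (Hdiv : forall a b x, 0 < x -> a <= b -> a / (1 + x / 2) <= b / (1 + x / 2)).
  { intros a b x Hx Hab. apply Rmult_le_compat_r; [apply Rlt_le, Rinv_0_lt_compat |]; lra. }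
  split; [intros x Hx; split; apply Rle_ge; [apply h5_le_h2 | apply h4_le_h5]; exact Hx |].
  split.
  { intros y Hy.
    destruct (hinv_h2_spec y Hy), (hinv_h4_spec y Hy), (hinv_h5_spec y Hy).
    split; apply hinv_le_hinv; auto using h4_increasing, h5_increasing, h4_le_h5, h5_le_h2. }
  split.
  { intros x Hx. split; apply Rle_ge; [now apply h2_ge_half_mul_ln |].
    apply Rmult_le_compat_l; [| apply ln_le]; lra. }
  split; [intros x Hx; apply Rle_ge, h4_ge_half_mul_ln, Hx |].
  split; [intros x Hx; apply Rle_ge, (Rle_trans _ _ _ (h4_ge_half_mul_ln x Hx)), h4_le_h5, Hx |].
  split; [exact (conj h2_equiv_0 h2_equiv_infty) |].
  split; [exact (conj h4_equiv_0 h4_equiv_infty) |].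
  split; [exact (conj h5_equiv_0 h5_equiv_infty) |].
  split; [exact (conj h2_sub_h4_equiv_0 h2_sub_h4_equiv_infty) |].
  split; [exact (conj h2_sub_h5_equiv_0 h2_sub_h5_equiv_infty) |].
  split; [intros x Hx; split; apply Rle_ge; [apply psi2_ge_ln | apply psi2_ge_rational]; exact Hx |].
  split.
  { intros x Hx. split; apply Rle_ge; [now apply psi4_ge_ln |].
    eapply Rle_trans; [apply Hdiv | apply psi4_ge_rational]; lra. }
  split.
  (* psi4 x >= 1 / (1 + x / 2) holds for every x > 0. *)
  { intros delta x Hdelta Hx. apply Rle_ge.
    eapply Rle_trans; [apply Hdiv | apply psi4_ge_rational]; lra. }
  intros x Hx.
  pose proof (psi4_le_psi5 x Hx). pose proof (psi4_ge_ln x Hx). pose proof (psi4_ge_rational x Hx).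
  split; lra.
Qed.
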